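(* Let $\theta\in\Theta\subseteq\mathbb{R}$ and let the data $\mathbf X\in\mathbb{R}^n$ be generated by $\mathbf X=\mathbf G(\mathbf U,\theta)$, where $\mathbf U$ is a random variable whose distribution does not depend on $\theta$. Assume there is a one-to-one $C^1$ transformation $\mathbf X\mapsto(S(\mathbf X),\mathbf A(\mathbf X))$ with $S(\mathbf X)$ real-valued and $\mathbf A(\mathbf X)$ an $(n-1)$-dimensional vector of ancillary statistics, in the sense that $\mathbf A(\mathbf G(\mathbf U,\theta))$ does not depend on $\theta$. Set $G_S(\mathbf u,\theta)=S(\mathbf G(\mathbf u,\theta))$ and $\mathbf G_{\mathbf A}(\mathbf u)=\mathbf A(\mathbf G(\mathbf u,\theta))$, so that $s=G_S(\mathbf U,\theta)$, $\mathbf a=\mathbf G_{\mathbf A}(\mathbf U)$. Let $Q_s(\mathbf u)=\{\theta: s=G_S(\mathbf u,\theta)\}$, let $\mathbf U^\star_{\mathbf a}$ have the conditional distribution of $\mathbf U$ given $\mathbf G_{\mathbf A}(\mathbf U)=\mathbf a$, and let $F_{S\mid\mathbf a}(\cdot,\theta)$ be the conditional distribution function of $S(\mathbf X)$ given $\mathbf A(\mathbf X)=\mathbf a$. Suppose (1) for every $\mathbf u$, $\theta\mapsto G_S(\mathbf u,\theta)$ is non-decreasing, and (2) for every $\mathbf u$ and $s$, $Q_s(\mathbf u)\neq\emptyset$. Then $Q_s(\mathbf u)$ is an interval with endpoints $Q^-_s(\mathbf u)\le Q^+_s(\mathbf u)$, and for any $s_0,\theta_0$, $$P\big(Q^+_{s_0}(\mathbf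 U^\star_{\mathbf a})\le\theta_0\big)=1-\lim_{\epsilon\downarrow0}F_{S\mid\mathbf a}(s_0,\theta_0+\epsilon),\qquad P\big(Q^-_{s_0}(\mathbf U^\star_{\mathbf a})\le\theta_0\big)=1-\lim_{\epsilon\downarrow0}F_{S\mid\mathbf a}(s_0-\epsilon,\theta_0).$$ If moreover (3) for all $\theta_0,s_0$, $F_{S\mid\mathbf a}(s_0,\theta_0)-\lim_{\epsilon\downarrow0}F_{S\mid\mathbf a}(s_0-\epsilon,\theta_0)=0$, then $F_{S\mid\mathbf a}(s,\theta)$ is continuous in $\theta$, $Q^+_{s_0}(\mathbf U^\star_{\mathbf a})=Q^-_{s_0}(\mathbf U^\star_{\mathbf a})$ almost surely, and $P\big(Q_{s_0}(\mathbf U^\star_{\mathbf a})\le\theta_0\big)=1-F_{S\mid\mathbf a}(s_0,\theta_0)$.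
   Context: When $P(Q_s(\mathbf U)\neq\emptyset)=1$, the generalized fiducial distribution of $\theta$ given observed $(s,\mathbf a)$ is the distribution of $Q_s(\mathbf U^\star_{\mathbf a})$. *)

From HB Require Import structures.
From mathcomp Require Import all_boot all_order all_algebra.
From mathcomp Require Import all_classical all_reals all_analysis measurable_realfun.
Set Implicit Arguments. Unset Strict Implicit. Unset Printing Implicit Defensive.
Import Order.TTheory GRing.Theory Num.Theory.
Import numFieldNormedType.Exports.
Local Open Scope classical_set_scope.
Local Open Scope ring_scope.

Definition rVBorel (R : realType) (k : nat) :=
  g_sigma_algebraType (@open 'rV[R]_k).

Definition C1 (R : realType) (m : nat) (V : normedModType R)
  (f : 'rV[R]_m -> V) : Prop :=
  (forall x, differentiable f x) /\ (forall v : 'rV[R]_m, continuous ('D_v f)).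

(* k is (a version of) the regular conditional distribution of U given
   GA(U) = a, where U is the identity on the probability space (TU, P):
   a |-> k a B is measurable, and
   P(U in B, GA(U) in C) = \int_{a in C} k a B  d(law of GA(U))(a). *)
Definition is_cond_distr d (TU : measurableType d) (R : realType) (n : nat)
  (P : probability TU R) (GA : TU -> rVBorel R n)
  (k : rVBorel R n -> probability TU R) : Prop :=
  (forall B : set TU, measurable B ->
     measurable_fun [set: rVBorel R n] ((fun a => k a B) : rVBorel R n -> \bar R)) /\
  (forall (B : set TU) (C : set (rVBorel R n)), measurable B -> measurable C ->
     P (B `&` GA @^-1` C) = (\int[pushforward P GA]_(a in C) k a B)%E).

Definition Qset (R : realType) (TU : Type) (GS : TU -> R -> R) (s : R) (u : TU)
  : set R := [set theta | s = GS u theta].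
Definition Qminus (R : realType) (TU : Type) (GS : TU -> R -> R) (s : R) (u : TU)
  : R := inf (Qset GS s u).
Definition Qplus (R : realType) (TU : Type) (GS : TU -> R -> R) (s : R) (u : TU)
  : R := sup (Qset GS s u).

(* Conditional distribution function of S(X) given A(X) = a under theta,
   X = G(U, theta): F_{S|a}(s, theta) = P(G_S(U*_a, theta) <= s). *)
Definition Fcond d (TU : measurableType d) (R : realType) (n : nat)
  (k : rVBorel R n -> probability TU R) (GS : TU -> R -> R)
  (a : rVBorel R n) (s theta : R) : R :=
  fine (k a [set u | GS u theta <= s]).

Definition GSof (R : realType) (TU : Type) (n : nat)
  (S : 'rV[R]_n -> R) (G : TU -> R -> 'rV[R]_n) : TU -> R -> R :=
  fun u theta => S (G u theta).

From HB Require Import structures.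
From mathcomp Require Import all_boot all_order all_algebra.
From mathcomp Require Import all_classical all_reals all_analysis measurable_realfun.
From mathcomp Require Import lra.
Set Implicit Arguments.
Unset Strict Implicit.
Unset Printing Implicit Defensive.
Import Order.TTheory GRing.Theory Num.Theory.
Import numFieldNormedType.Exports.
Local Open Scope classical_set_scope.
Local Open Scope ring_scope.

(* For every u the map G_S(u, .) is nondecreasing and onto, so the fibre
   Q_s(u) is an interval with endpoints Q^-_s(u) = inf Q_s(u) and
   Q^+_s(u) = sup Q_s(u), and
     th < Q^+_s(u)  <->  G_S(u, th + e) <= s for some e > 0,
     th < Q^-_s(u)  <->  G_S(u, th) <= s - e for some e > 0.
   These events increase as e decreases to 0, so continuity of the measure
   k a along them gives the two one-sided limits of F_{S|a}.  If F_{S|a} has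
   no jumps in s, the events G_S(u, th) = s are null.  Then F_{S|a}(s, .),
   which is always left-continuous, is also right-continuous, and
   Q^- = Q^+ almost surely: Q^-_s(u) < Q^+_s(u) would put some rational th
   with G_S(u, th) = s inside the fibre. *)

Section nondecreasing_onto.
Variables (R : realType) (f : R -> R).
Hypothesis f_nd : {homo f : x y / x <= y}.
Hypothesis f_onto : forall s, [set th | s = f th] !=set0.

Local Notation fiber s := [set th | s = f th].

Lemma lt_of_image_lt x y : f x < f y -> x < y.
Proof.
by move=> fxy; rewrite ltNge; apply: contraTN fxy => /f_nd; rewrite leNgt.
Qed.

Lemma exists_gt_image_lt x s : f x < s ->
  exists2 t, x < t & f t < s.
Proof.
move=> fxs; have [t /= ft] := f_onto ((f x + s) / 2).
by exists t; [apply: lt_of_image_lt | ]; rewrite -ft; lra.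
Qed.

Lemma fiber_has_ubound s : has_ubound (fiber s).
Proof.
have [t /= ft] := f_onto (s + 1); exists t => q /= fq.
by rewrite leNgt; apply/negP => /ltW /f_nd; rewrite -ft -fq; lra.
Qed.

Lemma fiber_has_lbound s : has_lbound (fiber s).
Proof.
have [t /= ft] := f_onto (s - 1); exists t => q /= fq.
by rewrite leNgt; apply/negP => /ltW /f_nd; rewrite -ft -fq; lra.
Qed.

Lemma fiber_itv s :
  inf (fiber s) <= sup (fiber s) /\
  [set th | inf (fiber s) < th < sup (fiber s)] `<=` fiber s /\
  fiber s `<=` [set th | inf (fiber s) <= th <= sup (fiber s)].
Proof.
have inf_le := ge_inf (fiber_has_lbound s).
have le_sup := ub_le_sup (fiber_has_ubound s).
have [q fq] := f_onto s.
split; [exact: le_trans (inf_le _ fq) (le_sup _ fq) | split];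
  last by move=> th fth /=; rewrite inf_le ?le_sup.
move=> th /= /andP[infth thsup].
have [q1 /= fq1 q1th] := @inf_adherent R (fiber s) (th - inf (fiber s))
  ltac:(by rewrite subr_gt0) (conj (f_onto s) (fiber_has_lbound s)).
have [q2 /= fq2 thq2] := @sup_adherent R (fiber s) (sup (fiber s) - th)
  ltac:(by rewrite subr_gt0) (conj (f_onto s) (fiber_has_ubound s)).
have : f q1 <= f th <= f q2 by rewrite !f_nd //; lra.
by rewrite -fq1 -fq2 -eq_le => /eqP.
Qed.

Lemma sup_fiber_leP s th :
  sup (fiber s) <= th <-> (forall t, th < t -> s < f t).
Proof.
have [q fq] := f_onto s; have le_sup := ub_le_sup (fiber_has_ubound s).
split=> [supth t tht | fs].
- rewrite lt_neqAle; apply/andP; split.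
    by apply/eqP => ft; have := le_sup _ ft; lra.
  by rewrite fq f_nd //; have := le_sup _ fq; lra.
- apply: ge_sup; first by exists q.
  by move=> t /= ft; rewrite leNgt; apply/negP => /fs; rewrite -ft ltxx.
Qed.

Lemma inf_fiber_leP s th : inf (fiber s) <= th <-> s <= f th.
Proof.
have [q fq] := f_onto s.
split=> [infth | sfth].
- rewrite leNgt; apply/negP => /exists_gt_image_lt[t tht fts].
  suff : t <= inf (fiber s) by lra.
  apply: lb_le_inf; first by exists q.
  by move=> q' /= fq'; apply/ltW/lt_of_image_lt; rewrite -fq'.
- have [s_fth|fths] := eqVneq s (f th).
    by apply: ge_inf; [exact: fiber_has_lbound|].
  apply: le_trans (ge_inf (fiber_has_lbound s) fq) _.
  by apply/ltW/lt_of_image_lt; rewrite -fq lt_neqAle fths.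
Qed.

Lemma le_of_left_le s th : (forall t, t < th -> f t <= s) -> f th <= s.
Proof.
move=> fs; rewrite leNgt; apply/negP => sfth.
have [t /= ft] := f_onto ((f th + s) / 2).
have /fs : t < th by apply: lt_of_image_lt; rewrite -ft; lra.
by rewrite -ft; lra.
Qed.

End nondecreasing_onto.

Section right_limit_at0.
Variable R : realType.
Implicit Types (g : R -> R) (l : R).

Lemma cvg_at_right0_harmonic g l :
  g e @[e --> 0^'+] --> l -> g n.+1%:R^-1 @[n --> \oo] --> l.
Proof.
move/cvg_at_rightP; apply; split; last exact: cvg_harmonic.
by move=> n; rewrite invr_gt0.
Qed.

Lemma nonincreasing_cvg_at_right0 g l :
  {in `]0, +oo[ &, nonincreasing_fun g} -> has_ubound (g @` `]0, +oo[) ->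
  g n.+1%:R^-1 @[n --> \oo] --> l -> g e @[e --> 0^'+] --> l.
Proof.
move=> g_ni g_ub gl.
have gL := @nonincreasing_at_right_cvgr R g 0 +oo%O isT g_ni g_ub.
by rewrite (cvg_unique _ gl (cvg_at_right0_harmonic gL)).
Qed.

Lemma nondecreasing_cvg_at_right0 g l :
  {in `]0, +oo[ &, nondecreasing_fun g} -> has_lbound (g @` `]0, +oo[) ->
  g n.+1%:R^-1 @[n --> \oo] --> l -> g e @[e --> 0^'+] --> l.
Proof.
move=> g_nd g_lb gl.
have gL := @nondecreasing_at_right_cvgr R g 0 +oo%O isT g_nd g_lb.
by rewrite (cvg_unique _ gl (cvg_at_right0_harmonic gL)).
Qed.

Lemma exists_harmonic_lt (e : R) : 0 < e -> exists n, n.+1%:R^-1 < e.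
Proof.
move=> e0; have [N _ /(_ N (leqnn N))] := near_infty_natSinv_lt (PosNum e0).
by exists N.
Qed.

Lemma harmonic_nonincreasing m n : (m <= n)%N -> n.+1%:R^-1 <= m.+1%:R^-1 :> R.
Proof. by move=> mn; rewrite lef_pV2 ?posrE // ler_nat ltnS. Qed.

Lemma cvg_at_right_shift0 g x l :
  g (x + e) @[e --> 0^'+] --> l -> g t @[t --> x^'+] --> l.
Proof.
move/cvg_at_rightP => gl; apply/cvg_at_rightP => u [xu ux].
have -> : (fun n => g (u n)) = (fun n => g (x + (u n - x))).
  by apply/funext => n; rewrite addrC subrK.
apply: (gl (fun n => u n - x)); split=> [n|]; first by rewrite subr_gt0.
by rewrite -(subrr x); apply: cvgB => //; exact: cvg_cst.
Qed.

Lemma cvg_at_left_shift0 g x l :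
  g (x - e) @[e --> 0^'+] --> l -> g t @[t --> x^'-] --> l.
Proof.
move/cvg_at_rightP => gl; apply/cvg_at_leftP => u [ux xu].
have -> : (fun n => g (u n)) = (fun n => g (x - (x - u n))).
  by apply/funext => n; rewrite opprB addrC subrK.
apply: (gl (fun n => x - u n)); split=> [n|]; first by rewrite subr_gt0.
by rewrite -(subrr x); apply: cvgB => //; exact: cvg_cst.
Qed.

End right_limit_at0.

Section finite_measure_at_right0.
Context d (T : measurableType d) (R : realType).
Variable mu : {finite_measure set T -> \bar R}.

Lemma fine_measure_le (A B : set T) : measurable A -> measurable B ->
  A `<=` B -> fine (mu A) <= fine (mu B).
Proof.
move=> mA mB AB; apply: fine_le; [exact: fin_num_measure..|].
exact: le_measure (mem_set mA) (mem_set mB) AB.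
Qed.

Section nonincreasing.
Variable E : R -> set T.
Hypothesis mE : forall e, 0 < e -> measurable (E e).
Hypothesis E_ni : forall e1 e2, 0 < e1 -> e1 <= e2 -> E e2 `<=` E e1.

Lemma bigcup_itv0y_harmonic :
  \bigcup_(e in `]0, +oo[) E e = \bigcup_n E n.+1%:R^-1.
Proof.
apply/seteqP; split=> [u [e /= /[!in_itv]/= /andP[e0 _] Eu] | u [n _ Eu]].
- have [n ne] := exists_harmonic_lt e0.
  by exists n => //; apply: E_ni Eu; rewrite ?invr_gt0 ?ltW.
- by exists n.+1%:R^-1 => //; rewrite /= in_itv /= andbT invr_gt0.
Qed.

Lemma measurable_bigcup_itv0y : measurable (\bigcup_(e in `]0, +oo[) E e).
Proof.
by rewrite bigcup_itv0y_harmonic; apply: bigcupT_measurable => n; apply: mE.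
Qed.

Lemma fine_measure_cvg_bigcup_itv0y :
  fine (mu (E e)) @[e --> 0^'+] --> fine (mu (\bigcup_(e in `]0, +oo[) E e)).
Proof.
apply: nonincreasing_cvg_at_right0.
- move=> e1 e2 /[!in_itv]/= /andP[e10 _] /andP[e20 _] e12.
  by apply: fine_measure_le; [exact: mE.. | exact: E_ni].
- exists (fine (mu setT)) => _ [e /= /[!in_itv]/= /andP[e0 _] <-].
  by apply: fine_measure_le => //; exact: mE.
- have mEn n : measurable (E n.+1%:R^-1) by apply: mE; rewrite invr_gt0.
  have nd : nondecreasing_seq (fun n => E n.+1%:R^-1).
    move=> m n mn; rewrite subsetEset.
    by apply: E_ni; [rewrite invr_gt0 | exact: harmonic_nonincreasing].
  suff : mu (E n.+1%:R^-1) @[n --> \oo] -->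
         (fine (mu (\bigcup_(e in `]0, +oo[) E e)))%:E by move/fine_cvgP => [].
  rewrite fineK; last exact: fin_num_measure _ _ measurable_bigcup_itv0y.
  rewrite bigcup_itv0y_harmonic.
  exact: (nondecreasing_cvg_mu mEn (bigcupT_measurable _ mEn) nd).
Qed.

End nonincreasing.

Section nondecreasing.
Variable E : R -> set T.
Hypothesis mE : forall e, 0 < e -> measurable (E e).
Hypothesis E_nd : forall e1 e2, 0 < e1 -> e1 <= e2 -> E e1 `<=` E e2.

Lemma bigcap_itv0y_harmonic :
  \bigcap_(e in `]0, +oo[) E e = \bigcap_n E n.+1%:R^-1.
Proof.
apply/seteqP; split=> [u Eu n _ | u Eu e /= /[!in_itv]/= /andP[e0 _]].
- by apply: Eu; rewrite /= in_itv /= andbT invr_gt0.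
- have [n ne] := exists_harmonic_lt e0.
  by apply: E_nd (Eu n I); rewrite ?invr_gt0 ?ltW.
Qed.

Lemma measurable_bigcap_itv0y : measurable (\bigcap_(e in `]0, +oo[) E e).
Proof.
by rewrite bigcap_itv0y_harmonic; apply: bigcapT_measurable => n; apply: mE.
Qed.

Lemma fine_measure_cvg_bigcap_itv0y :
  fine (mu (E e)) @[e --> 0^'+] --> fine (mu (\bigcap_(e in `]0, +oo[) E e)).
Proof.
apply: nondecreasing_cvg_at_right0.
- move=> e1 e2 /[!in_itv]/= /andP[e10 _] /andP[e20 _] e12.
  by apply: fine_measure_le; [exact: mE.. | exact: E_nd].
- by exists 0 => _ [e _ <-]; exact: fine_ge0.
- have mEn n : measurable (E n.+1%:R^-1) by apply: mE; rewrite invr_gt0.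
  have ni : nonincreasing_seq (fun n => E n.+1%:R^-1).
    move=> m n mn; rewrite subsetEset.
    by apply: E_nd; [rewrite invr_gt0 | exact: harmonic_nonincreasing].
  suff : mu (E n.+1%:R^-1) @[n --> \oo] -->
         (fine (mu (\bigcap_(e in `]0, +oo[) E e)))%:E by move/fine_cvgP => [].
  rewrite fineK; last exact: fin_num_measure _ _ measurable_bigcap_itv0y.
  rewrite bigcap_itv0y_harmonic.
  have mu0 : (mu (E 1%:R^-1) < +oo)%E.
    by have /fin_numPlt/andP[] := fin_num_measure mu _ (mEn 0%N).
  exact: (nonincreasing_cvg_mu mu0 mEn (bigcapT_measurable mEn) ni).
Qed.

End nondecreasing.

End finite_measure_at_right0.

Lemma fine_probability_setC d (T : measurableType d) (R : realType)
    (mu : probability T R) (A : set T) :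
  measurable A -> fine (mu (~` A)) = 1 - fine (mu A).
Proof.
by move=> mA; rewrite probability_setC // -(fineK (fin_num_measure mu _ mA)).
Qed.

Lemma measurable_GSof_le d (T : measurableType d) (R : realType) (m : nat)
    (S : 'rV[R]_m -> R) (G : T -> R -> 'rV[R]_m) :
  continuous S ->
  (forall th, measurable_fun [set: T] ((fun u => G u th) : T -> rVBorel R m)) ->
  forall s th, measurable [set u | GSof S G u th <= s].
Proof.
move=> cS mG s th.
have mS : measurable (S @^-1` [set x | s < x] : set (rVBorel R m)).
  apply: sub_sigma_algebra; apply: open_comp => [x _|]; first exact: cS.
  exact: open_gt.
have := mG th measurableT _ (measurableC mS); rewrite setTI.
by congr measurable; apply/seteqP; split => u /=; rewrite leNgt => /negP.
Qed.

Section monotone_pivot.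
Context d (T : measurableType d) (R : realType) (GS : T -> R -> R).
Hypothesis GS_nd : forall u, {homo GS u : x y / x <= y}.
Hypothesis GS_onto : forall u s, Qset GS s u !=set0.
Hypothesis measurable_GS_le : forall s th, measurable [set u | GS u th <= s].

Lemma Qplus_leP u s th : Qplus GS s u <= th <-> (forall t, th < t -> s < GS u t).
Proof. exact: (sup_fiber_leP (GS_nd u) (GS_onto u)). Qed.

Lemma Qminus_leP u s th : Qminus GS s u <= th <-> s <= GS u th.
Proof. exact: (inf_fiber_leP (GS_nd u) (GS_onto u)). Qed.

Lemma Qplus_gtE s th :
  ~` [set u | Qplus GS s u <= th] =
  \bigcup_(e in `]0, +oo[) [set u | GS u (th + e) <= s].
Proof.
apply/seteqP; split=> [u /= Qp_gt | u [e /= /[!in_itv]/= /andP[e0 _] GSe] /=].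
- apply: contrapT => noGS; apply/Qp_gt/Qplus_leP => t tht.
  rewrite ltNge; apply/negP => GSt; apply: noGS; exists (t - th).
    by rewrite /= in_itv /= andbT subr_gt0.
  by rewrite /= addrC subrK.
- by move/Qplus_leP/(_ (th + e)); rewrite ltrDl => /(_ e0); rewrite ltNge GSe.
Qed.

Lemma Qminus_gtE s th :
  ~` [set u | Qminus GS s u <= th] = [set u | GS u th < s].
Proof.
apply/seteqP; split=> u /=; rewrite ltNge.
- by move/Qminus_leP/negP.
- by move=> /negP + /Qminus_leP.
Qed.

Lemma GS_ltE s th :
  [set u | GS u th < s] = \bigcup_(e in `]0, +oo[) [set u | GS u th <= s - e].
Proof.
apply/seteqP; split=> [u /= GSs | u [e /= /[!in_itv]/= /andP[e0 _]] /=]; last lra.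
exists (s - GS u th); first by rewrite /= in_itv /= andbT subr_gt0.
by rewrite /= subKr.
Qed.

Lemma GS_leE s th :
  [set u | GS u th <= s] =
  \bigcap_(e in `]0, +oo[) [set u | GS u (th - e) <= s].
Proof.
apply/seteqP; split=> [u /= GSs e /= /[!in_itv]/= /andP[e0 _] | u /= GSs].
- by apply: le_trans GSs; apply: GS_nd; lra.
- apply: (le_of_left_le (GS_nd u) (GS_onto u)) => t tth.
  have := GSs (th - t); rewrite subKr; apply.
  by rewrite /= in_itv /= andbT subr_gt0.
Qed.

Lemma GS_lt_sub_Qplus_gt s th :
  [set u | GS u th < s] `<=` ~` [set u | Qplus GS s u <= th].
Proof.
move=> u /= /(exists_gt_image_lt (GS_nd u) (GS_onto u)) [t tht GSt].
by move/Qplus_leP/(_ t tht); rewrite ltNge (ltW GSt).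
Qed.

Lemma Qplus_gt_sub_GS_le s th :
  ~` [set u | Qplus GS s u <= th] `<=` [set u | GS u th <= s].
Proof.
rewrite Qplus_gtE => u [e /= /[!in_itv]/= /andP[e0 _]]; apply: le_trans.
by apply: GS_nd; rewrite lerDl ltW.
Qed.

Lemma measurable_GS_lt s th : measurable [set u | GS u th < s].
Proof.
rewrite GS_ltE; apply: measurable_bigcup_itv0y => [e _|e1 e2 _ e12 u /=].
- exact: measurable_GS_le.
- lra.
Qed.

Lemma GS_eqE s th :
  [set u | GS u th = s] = [set u | GS u th <= s] `\` [set u | GS u th < s].
Proof.
apply/seteqP; split=> u /=; first by move=> ->; rewrite lexx ltxx.
by move=> [GSs /negP]; rewrite -leNgt => sGS; apply/le_anti/andP.
Qed.

Lemma measurable_GS_eq s th : measurable [set u | GS u th = s].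
Proof.
rewrite GS_eqE; apply: measurableD; first exact: measurable_GS_le.
exact: measurable_GS_lt.
Qed.

Lemma measurable_Qplus_le s th : measurable [set u | Qplus GS s u <= th].
Proof.
rewrite -[X in measurable X]setCK Qplus_gtE; apply/measurableC.
apply: measurable_bigcup_itv0y => [e _|e1 e2 _ e12 u /=].
  exact: measurable_GS_le.
by apply: le_trans; apply: GS_nd; rewrite lerD2l.
Qed.

Lemma measurable_Qminus_le s th : measurable [set u | Qminus GS s u <= th].
Proof.
rewrite -[X in measurable X]setCK Qminus_gtE.
exact/measurableC/measurable_GS_lt.
Qed.

Variable mu : probability T R.
(* F s th is F_{S|a}(s, th) when mu = k a. *)
Local Notation F s th := (fine (mu [set u | GS u th <= s])).

Lemma cvg_F_right_th s th :
  F s (th + e) @[e --> 0^'+] --> 1 - fine (mu [set u | Qplus GS s u <= th]).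
Proof.
rewrite -fine_probability_setC; last exact: measurable_Qplus_le.
rewrite Qplus_gtE; apply: fine_measure_cvg_bigcup_itv0y => [e _|e1 e2 _ e12 u /=].
  exact: measurable_GS_le.
by apply: le_trans; apply: GS_nd; rewrite lerD2l.
Qed.

Lemma cvg_F_left_s_lt s th :
  F (s - e) th @[e --> 0^'+] --> fine (mu [set u | GS u th < s]).
Proof.
rewrite GS_ltE; apply: fine_measure_cvg_bigcup_itv0y => [e _|e1 e2 _ e12 u /=].
  exact: measurable_GS_le.
lra.
Qed.

Lemma cvg_F_left_s s th :
  F (s - e) th @[e --> 0^'+] --> 1 - fine (mu [set u | Qminus GS s u <= th]).
Proof.
rewrite -fine_probability_setC; last exact: measurable_Qminus_le.
by rewrite Qminus_gtE; exact: cvg_F_left_s_lt.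
Qed.

Lemma cvg_F_left_th s th : F s (th - e) @[e --> 0^'+] --> F s th.
Proof.
rewrite (GS_leE s th).
apply: fine_measure_cvg_bigcap_itv0y => [e _|e1 e2 _ e12 u /=].
  exact: measurable_GS_le.
by apply: le_trans; apply: GS_nd; lra.
Qed.

Section left_continuous_in_s.
Hypothesis F_left_cont : forall s th, F (s - e) th @[e --> 0^'+] --> F s th.

Lemma fine_GS_lt s th : fine (mu [set u | GS u th < s]) = F s th.
Proof. exact: (cvg_unique _ (@cvg_F_left_s_lt s th) (@F_left_cont s th)). Qed.

Lemma measure_GS_eq0 s th : mu [set u | GS u th = s] = 0%E.
Proof.
have fin_le := fin_num_measure mu _ (measurable_GS_le s th).
have fin_lt := fin_num_measure mu _ (measurable_GS_lt s th).
rewrite GS_eqE measureD ?setIidr; first last.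
- by move/fin_numPlt/andP: fin_le => [].
- exact: measurable_GS_lt.
- exact: measurable_GS_le.
- by move=> u /ltW.
rewrite -[X in (X - _)%E]fineK // -[X in (_ - X)%E]fineK //.
by rewrite fine_GS_lt -EFinB subrr.
Qed.

Lemma fine_Qplus_gt s th :
  fine (mu (~` [set u | Qplus GS s u <= th])) = F s th.
Proof.
have mQp := measurableC (measurable_Qplus_le s th).
apply/le_anti/andP; split.
- exact: fine_measure_le mQp (measurable_GS_le s th) (@Qplus_gt_sub_GS_le s th).
- rewrite -fine_GS_lt.
  exact: fine_measure_le (measurable_GS_lt s th) mQp (@GS_lt_sub_Qplus_gt s th).
Qed.

Lemma continuous_F s : continuous (fun th => F s th).
Proof.
move=> th; apply/left_right_continuousP; split.
  by apply: cvg_at_left_shift0; exact: cvg_F_left_th.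
apply: cvg_at_right_shift0; rewrite -fine_Qplus_gt fine_probability_setC.
  exact: cvg_F_right_th.
exact: measurable_Qplus_le.
Qed.

Lemma measure_Qplus_le s th :
  mu [set u | Qplus GS s u <= th] = (1 - F s th)%:E.
Proof.
have mQp := measurable_Qplus_le s th.
rewrite -fine_Qplus_gt fine_probability_setC // subKr fineK //.
exact: fin_num_measure.
Qed.

Lemma measure_Qminus_le s th :
  mu [set u | Qminus GS s u <= th] = (1 - F s th)%:E.
Proof.
have mQm := measurable_Qminus_le s th.
rewrite -fine_GS_lt -Qminus_gtE fine_probability_setC // subKr fineK //.
exact: fin_num_measure.
Qed.

Lemma ae_Qplus_eq_Qminus s : {ae mu, forall u, Qplus GS s u = Qminus GS s u}.
Proof.
pose N m : set T :=
  if unpickle m is Some q then [set u | GS u (ratr q) = s] else set0.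
have N0 m : mu.-negligible (N m).
  rewrite /N; case: (unpickle m) => [q|]; last exact: negligible_set0.
  exists [set u | GS u (ratr q) = s]; split => //.
  - exact: measurable_GS_eq.
  - exact: measure_GS_eq0.
apply: negligibleS (negligible_bigcup N0) => u /= Qpm.
have [Qm_le [Qopen _]] := fiber_itv (GS_nd u) (GS_onto u) s.
have Qm_lt : Qminus GS s u < Qplus GS s u.
  by rewrite lt_def andbC; apply/andP; split; [exact: Qm_le | apply/eqP].
have [q] := rat_in_itvoo Qm_lt; rewrite in_itv /= => /andP[Qmq qQp].
exists (pickle q); first exact: I.
by rewrite /N pickleK /=; apply/esym/Qopen; apply/andP; split.
Qed.

End left_continuous_in_s.
End monotone_pivot.

Theorem corollary1 (R : realType) (n : nat)
  (d : measure_display) (TU : measurableType d) (P : probability TU R)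
  (G : TU -> R -> 'rV[R]_n.+1)
  (S : 'rV[R]_n.+1 -> R) (A : 'rV[R]_n.+1 -> 'rV[R]_n)
  (GA : TU -> 'rV[R]_n)
  (k : rVBorel R n -> probability TU R)
  (hG : forall theta : R,
      measurable_fun [set: TU] ((fun u => G u theta) : TU -> rVBorel R n.+1))
  (hSA_bij : bijective (fun x : 'rV[R]_n.+1 => (S x, A x)))
  (hS_C1 : C1 S) (hA_C1 : C1 A)
  (hanc : forall (u : TU) (theta : R), A (G u theta) = GA u)
  (hGA : measurable_fun [set: TU] (GA : TU -> rVBorel R n))
  (hk : is_cond_distr P GA k)
  (h1 : forall u : TU, {homo (GSof S G u) : x y / x <= y})
  (h2 : forall (u : TU) (s : R), Qset (GSof S G) s u !=set0) :
  (forall (s : R) (u : TU),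
      Qminus (GSof S G) s u <= Qplus (GSof S G) s u /\
      [set th | Qminus (GSof S G) s u < th < Qplus (GSof S G) s u]
        `<=` Qset (GSof S G) s u /\
      Qset (GSof S G) s u
        `<=` [set th | Qminus (GSof S G) s u <= th <= Qplus (GSof S G) s u])
  /\
  (forall (a : rVBorel R n) (s0 th0 : R),
      Fcond k (GSof S G) a s0 (th0 + e) @[e --> 0^'+]
        --> 1 - fine (k a [set u | Qplus (GSof S G) s0 u <= th0]) /\
      Fcond k (GSof S G) a (s0 - e) th0 @[e --> 0^'+]
        --> 1 - fine (k a [set u | Qminus (GSof S G) s0 u <= th0]))
  /\
  (forall a : rVBorel R n,
      (forall th0 s0 : R,
          Fcond k (GSof S G) a s0 th0
          - lim (Fcond k (GSof S G) a (s0 - e) th0 @[e --> 0^'+]) = 0) ->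
      (forall s : R, continuous (fun th => Fcond k (GSof S G) a s th)) /\
      (forall s0 : R,
          {ae k a, forall u, Qplus (GSof S G) s0 u = Qminus (GSof S G) s0 u}) /\
      (forall s0 th0 : R,
          k a [set u | Qplus (GSof S G) s0 u <= th0]
            = (1 - Fcond k (GSof S G) a s0 th0)%:E /\
          k a [set u | Qminus (GSof S G) s0 u <= th0]
            = (1 - Fcond k (GSof S G) a s0 th0)%:E)).
Proof.
have cS : continuous S := fun x => differentiable_continuous (hS_C1.1 x).
have mGS := measurable_GSof_le cS hG.
split; first by move=> s u; exact: fiber_itv (h1 u) (h2 u) s.
split.
  by move=> a s0 th0; split; [exact: cvg_F_right_th | exact: cvg_F_left_s].
move=> a F_no_jump.
have F_left_cont s th :
    Fcond k (GSof S G) a (s - e) th @[e --> 0^'+] --> Fcond k (GSof S G) a s th.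
  have /cvgP cv := cvg_F_left_s h1 h2 mGS (mu := k a) (s := s) (th := th).
  by move/eqP: (F_no_jump th s); rewrite subr_eq0 => /eqP ->; exact: cv.
split; first exact: continuous_F.
split; first exact: ae_Qplus_eq_Qminus.
by move=> s0 th0; split; [exact: measure_Qplus_le | exact: measure_Qminus_le].
Qed.
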